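(* Let $\mathcal{L}$ be an algebraic signature containing at least one constant symbol, and let $\mathcal{V}$ be a coherent variety of $\mathcal{L}$-algebras with a term-definable join-semilattice reduct. Let $t(x,\bar{u})$ be an $\mathcal{L}$-term such that \[ \mathcal{V} \models x \le t(x,\bar{u}) \quad\text{and}\quad \mathcal{V} \models x \le y \,\Rightarrow\, t(x,\bar{u}) \le t(y,\bar{u}). \] Suppose that $\mathcal{V}$ satisfies the following fixpoint embedding condition (FE) with respect to $t(x,\bar{u})$: for any finitely generated $\mathbf{A}\in\mathcal{V}$ and any $a,\bar{b}\in A$, there exists $\mathbf{B}\in\mathcal{V}$ such that $\mathbf{A}$ is a subalgebra of $\mathbf{B}$, the join $\bigvee_{k\in\mathbb{N}} t^k(a,\bar{b})$ exists in $\mathbf{B}$, and \[ \bigvee_{k\in\mathbb{N}} t^k(a,\bar{b}) = t\Big(\bigvee_{k\in\mathbb{N}} t^k(a,\bar{b}),\bar{b}\Big). \] Then $\mathcal{V}\models t^n(x,\bar{u}) \approx t^{n+1}(x,\bar{u})$ for some $n\in\mathbb{N}$.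
   Context: A variety $\mathcal{V}$ is coherent if every finitely generated subalgebra of a finitely presented member of $\mathcal{V}$ is finitely presented; an algebra is finitely presented in $\mathcal{V}$ if it is isomorphic to $\mathbf{F}(\bar{x})/\Theta$ for a finite set $\bar{x}$ and a compact (finitely generated) congruence $\Theta$ on the free algebra $\mathbf{F}(\bar{x})$ of $\mathcal{V}$. ''Term-definable join-semilattice reduct'' means there is a binary term $\vee$ that defines a join-semilattice in every member of $\mathcal{V}$; $s\le t$ abbreviates $s\vee t\approx t$, and joins $\bigvee$ refer to this semilattice order. Iterates are defined by $t^0(x,\bar{u}) := x$ and $t^{k+1}(x,\bar{u}) := t(t^k(x,\bar{u}),\bar{u})$. *)

From Stdlib Require Import List.
From Stdlib Require Vectors.Fin.

Record signature := Signature { sym : Type; arity : sym -> nat }.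

Inductive term (L : signature) (X : Type) : Type :=
| Var : X -> term L X
| App : forall f : sym L, (Fin.t (arity L f) -> term L X) -> term L X.
Arguments Var {L X} x.
Arguments App {L X} f ts.

Record algebra (L : signature) := Algebra {
  carrier :> Type;
  op : forall f : sym L, (Fin.t (arity L f) -> carrier) -> carrier }.
Arguments Algebra {L} carrier op.
Arguments op {L} a f args : rename.

Fixpoint eval {L : signature} {X : Type} (A : algebra L) (v : X -> A)
  (t : term L X) : A :=
  match t with
  | Var x => v x
  | App f ts => op A f (fun i => eval A v (ts i))
  end.

Fixpoint subst {L : signature} {X Y : Type} (s : X -> term L Y)
  (t : term L X) : term L Y :=
  match t with
  | Var x => s x
  | App f ts => App f (fun i => subst s (ts i))
  end.

(** Varieties: equational classes given by a set E of identities
    (in countably many variables). *)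
Definition identities (L : signature) := term L nat -> term L nat -> Prop.

Definition in_var {L : signature} (E : identities L) (A : algebra L) : Prop :=
  forall s t, E s t -> forall v : nat -> A, eval A v s = eval A v t.

Definition V_eq {L : signature} (E : identities L) {X : Type}
  (s t : term L X) : Prop :=
  forall A : algebra L, in_var E A -> forall v : X -> A, eval A v s = eval A v t.

(** The congruence on the term algebra over n variables corresponding to the
    compact congruence on F(x_1..x_n) generated by the (finitely many) pairs R. *)
Inductive fp_cong {L : signature} (E : identities L) (n : nat)
  (R : list (term L (Fin.t n) * term L (Fin.t n))) :
  term L (Fin.t n) -> term L (Fin.t n) -> Prop :=
| fc_V s t : V_eq E s t -> fp_cong E n R s t
| fc_R s t : In (s, t) R -> fp_cong E n R s t
| fc_refl s : fp_cong E n R s s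
| fc_sym s t : fp_cong E n R s t -> fp_cong E n R t s
| fc_trans s t u : fp_cong E n R s t -> fp_cong E n R t u -> fp_cong E n R s u
| fc_compat f ss ts : (forall i, fp_cong E n R (ss i) (ts i)) ->
    fp_cong E n R (App f ss) (App f ts).

(** A is isomorphic to F(x_1..x_n)/Theta with Theta compact: there is a
    surjective homomorphism from the term algebra (generators g) whose kernel
    is exactly the preimage of Theta. *)
Definition fin_presented {L : signature} (E : identities L) (A : algebra L) : Prop :=
  exists (n : nat) (R : list (term L (Fin.t n) * term L (Fin.t n)))
         (g : Fin.t n -> A),
    (forall a : A, exists t, eval A g t = a) /\
    (forall s t, eval A g s = eval A g t <-> fp_cong E n R s t).

Inductive gen {L : signature} (A : algebra L) (n : nat) (g : Fin.t n -> A) : A -> Prop :=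
| gen_base i : gen A n g (g i)
| gen_op f args : (forall i, gen A n g (args i)) -> gen A n g (op A f args).

Definition sub_gen {L : signature} (A : algebra L) (n : nat) (g : Fin.t n -> A)
  : algebra L :=
  Algebra {a : A | gen A n g a}
    (fun f args => exist _ (op A f (fun i => proj1_sig (args i)))
                         (gen_op A n g f _ (fun i => proj2_sig (args i)))).

Definition fin_gen {L : signature} (A : algebra L) : Prop :=
  exists (n : nat) (g : Fin.t n -> A), forall a : A, gen A n g a.

Definition coherent {L : signature} (E : identities L) : Prop :=
  forall A : algebra L, in_var E A -> fin_presented E A ->
    forall (n : nat) (g : Fin.t n -> A), fin_presented E (sub_gen A n g).

Definition is_hom {L : signature} (A B : algebra L) (e : A -> B) : Prop :=
  forall f args, e (op A f args) = op B f (fun i => e (args i)).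

(** Binary term J (variables: true = x, false = y) and the induced operation. *)
Definition jn {L : signature} (J : term L bool) (A : algebra L) (x y : A) : A :=
  eval A (fun b : bool => if b then x else y) J.

Definition leJ {L : signature} (J : term L bool) (A : algebra L) (x y : A) : Prop :=
  jn J A x y = y.

Definition semilattice_term {L : signature} (E : identities L) (J : term L bool) : Prop :=
  forall A : algebra L, in_var E A -> forall x y z : A,
    jn J A x x = x /\ jn J A x y = jn J A y x /\
    jn J A (jn J A x y) z = jn J A x (jn J A y z).

(** Terms t(x, u) : variable 0 is x, the other variables are the parameters u. *)
Fixpoint titer {L : signature} (t : term L nat) (k : nat) : term L nat :=
  match k with
  | O => Var 0
  | S k => subst (fun i => match i with O => titer t k | _ => Var i end) t
  end.

Definition upd0 {A : Type} (v : nat -> A) (y : A) : nat -> A :=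
  fun i => match i with O => y | S j => v (S j) end.

Definition is_join {L : signature} (J : term L bool) (B : algebra L)
  (P : nat -> B) (s : B) : Prop :=
  (forall k, leJ J B (P k) s) /\
  (forall u, (forall k, leJ J B (P k) u) -> leJ J B s u).

Definition FE {L : signature} (E : identities L) (J : term L bool) (t : term L nat) : Prop :=
  forall A : algebra L, in_var E A -> fin_gen A ->
  forall v : nat -> A,
  exists (B : algebra L) (e : A -> B),
    in_var E B /\ is_hom A B e /\ (forall x y, e x = e y -> x = y) /\
    exists s : B,
      is_join J B (fun k => e (eval A v (titer t k))) s /\
      s = eval B (upd0 (fun i => e (v i)) s) t.

From Stdlib Require Import List Arith Lia.
From Stdlib Require Import FunctionalExtensionality PropExtensionality.
From Stdlib Require Import ProofIrrelevance IndefiniteDescription.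
From Stdlib Require Vectors.Fin.
Import ListNotations.

(* Let Theta_n be the congruence of the free algebra F(x, u, w) generated by
   t^n(x, u) <= w; these increase with n, and Theta_inf is their union.  Applying (FE)
   to F/Theta_inf gives an extension in which s = \/_k t^k(x, u) exists, is fixed by
   t(-, u) and lies below w.  Hence y := s satisfies the relations of the finitely
   presented algebra A = <x, u, w, y | x <= y, t(y, u) = y, y <= w>, so the kernel of
   F(x, u, w) -> A is contained in Theta_inf.  By coherence this kernel is finitely
   generated, hence contained in a single Theta_n.  Since t^(n+1)(x, u) <= y <= w holds
   in A, the inequality t^(n+1)(x, u) <= w follows in V from t^n(x, u) <= w; taking
   w := t^n(x, u) gives t^(n+1) <= t^n, while t^n <= t^(n+1) always holds. *)

Lemma eventually_all_list {T : Type} (P : nat -> T -> Prop) (l : list T) :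
  (forall n n' x, n <= n' -> P n x -> P n' x) ->
  (forall x, In x l -> exists n, P n x) -> exists n, forall x, In x l -> P n x.
Proof.
  intros Hmono; induction l as [|a l IH]; intros Hl.
  - exists 0; intros x [].
  - destruct (Hl a (or_introl eq_refl)) as [n0 H0].
    destruct IH as [n1 H1]; [intros x Hx; apply Hl; right; exact Hx|].
    exists (max n0 n1); intros x [<-|Hx].
    + apply (Hmono n0); [lia|exact H0].
    + apply (Hmono n1); [lia|exact (H1 x Hx)].
Qed.

Fixpoint fin_enum (k : nat) : list (Fin.t k) :=
  match k with 0 => [] | S k' => Fin.F1 :: map Fin.FS (fin_enum k') end.

Lemma fin_enum_complete k (i : Fin.t k) : In i (fin_enum k).
Proof. induction i; simpl; [left; reflexivity | right; apply in_map; exact IHi]. Qed.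

Lemma eventually_all_fin {m} (P : nat -> Fin.t m -> Prop) :
  (forall n n' i, n <= n' -> P n i -> P n' i) ->
  (forall i, exists n, P n i) -> exists n, forall i, P n i.
Proof.
  intros Hmono Hi.
  destruct (eventually_all_list P (fin_enum m) Hmono) as [n Hn]; [intros i _; apply Hi|].
  exists n; intro i; apply Hn, fin_enum_complete.
Qed.

Definition fin_cons {X : Type} {n : nat} (a : X) (f : Fin.t n -> X) (i : Fin.t (S n)) : X :=
  Fin.caseS' i (fun _ => X) a f.

(* Out-of-range indices are sent to [Fin.F1]. *)
Definition fin_of_nat (m i : nat) : Fin.t (S m) :=
  match lt_dec i (S m) with left H => Fin.of_nat_lt H | right _ => Fin.F1 end.

Lemma fin_to_nat_of_nat m i : i < S m -> proj1_sig (Fin.to_nat (fin_of_nat m i)) = i.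
Proof.
  intro H; unfold fin_of_nat; destruct (lt_dec i (S m)); [|lia].
  rewrite Fin.to_nat_of_nat; reflexivity.
Qed.

Section Terms.
Context {L : signature}.

Lemma eval_subst {X Y : Type} (A : algebra L) (u : Y -> A) (s : X -> term L Y) a :
  eval A u (subst s a) = eval A (fun x => eval A u (s x)) a.
Proof.
  induction a as [x|f ts IH]; simpl; [reflexivity|].
  f_equal; extensionality i; apply IH.
Qed.

Lemma subst_Var {X : Type} (a : term L X) : subst Var a = a.
Proof.
  induction a as [x|f ts IH]; simpl; [reflexivity|].
  f_equal; extensionality i; apply IH.
Qed.

Lemma eval_hom {X : Type} (A B : algebra L) (e : A -> B) :
  is_hom A B e -> forall (u : X -> A) a, e (eval A u a) = eval B (fun x => e (u x)) a.
Proof.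
  intros He u a; induction a as [x|f ts IH]; simpl; [reflexivity|].
  rewrite He; f_equal; extensionality i; apply IH.
Qed.

Lemma eval_titer_S (A : algebra L) (v : nat -> A) t k :
  eval A v (titer t (S k)) = eval A (upd0 v (eval A v (titer t k))) t.
Proof.
  simpl titer; rewrite eval_subst; f_equal.
  extensionality i; destruct i; reflexivity.
Qed.

Definition jt (J : term L bool) {X : Type} (a b : term L X) : term L X :=
  subst (fun z : bool => if z then a else b) J.

Lemma eval_jt J {X : Type} (A : algebra L) (u : X -> A) a b :
  eval A u (jt J a b) = jn J A (eval A u a) (eval A u b).
Proof.
  unfold jt, jn; rewrite eval_subst; f_equal.
  extensionality z; destruct z; reflexivity.
Qed.

Lemma leJ_hom J (A B : algebra L) (e : A -> B) :
  is_hom A B e -> forall x y, leJ J A x y -> leJ J B (e x) (e y).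
Proof.
  intros He x y Hxy; unfold leJ in *.
  rewrite <- Hxy at 2; unfold jn; rewrite (eval_hom A B e He); f_equal.
  extensionality z; destruct z; reflexivity.
Qed.

End Terms.

Section SemilatticeOrder.
Context {L : signature} {E : identities L} {J : term L bool}.
Hypothesis HJ : semilattice_term E J.

Lemma leJ_refl D : in_var E D -> forall x : D, leJ J D x x.
Proof. intros HD x; apply (HJ D HD x x x). Qed.

Lemma leJ_trans D : in_var E D -> forall x y z : D, leJ J D x y -> leJ J D y z -> leJ J D x z.
Proof.
  intros HD x y z Hxy Hyz; unfold leJ in *.
  destruct (HJ D HD x y z) as (_ & _ & Hassoc).
  rewrite <- Hyz, <- Hassoc, Hxy; reflexivity.
Qed.

Lemma leJ_antisym D : in_var E D -> forall x y : D, leJ J D x y -> leJ J D y x -> x = y.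
Proof.
  intros HD x y Hxy Hyx; unfold leJ in *.
  rewrite <- Hxy, <- Hyx at 1; apply (HJ D HD y x x).
Qed.

End SemilatticeOrder.

Record congruence {L : signature} {X : Type} (R : term L X -> term L X -> Prop) : Prop := {
  cong_refl : forall a, R a a;
  cong_sym : forall a b, R a b -> R b a;
  cong_trans : forall a b c, R a b -> R b c -> R a c;
  cong_app : forall f ss ts, (forall i, R (ss i) (ts i)) -> R (App f ss) (App f ts) }.

Section TermQuotient.
Context {L : signature} {X : Type} (R : term L X -> term L X -> Prop).

Definition cls (a : term L X) : {P | exists a, P = R a} :=
  exist _ (R a) (ex_intro _ a eq_refl).

Definition rep (q : {P | exists a, P = R a}) : term L X :=
  proj1_sig (constructive_indefinite_description _ (proj2_sig q)).

Lemma cls_rep q : cls (rep q) = q.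
Proof.
  destruct q as [P HP]; unfold rep, cls; simpl.
  destruct (constructive_indefinite_description _ HP) as [a ->]; simpl.
  f_equal; apply proof_irrelevance.
Qed.

Definition term_quot : algebra L :=
  Algebra {P | exists a, P = R a} (fun f args => cls (App f (fun i => rep (args i)))).

End TermQuotient.

Section TermQuotientTheory.
Context {L : signature} {X : Type} {R : term L X -> term L X -> Prop}.
Hypothesis HR : congruence R.

Lemma cls_eq a b : cls R a = cls R b <-> R a b.
Proof.
  split.
  - intro H; apply (f_equal (@proj1_sig _ _)) in H; simpl in H.
    rewrite H; apply (cong_refl R HR).
  - intro Hab; apply eq_sig_hprop; [intros; apply proof_irrelevance|]; simpl.
    extensionality c; apply propositional_extensionality; split; intro H.
    + exact (cong_trans R HR b a c (cong_sym R HR a b Hab) H).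
    + exact (cong_trans R HR a b c Hab H).
Qed.

Lemma eval_cls {Y : Type} (rho : Y -> term L X) a :
  eval (term_quot R) (fun y => cls R (rho y)) a = cls R (subst rho a).
Proof.
  induction a as [y|f ts IH]; [reflexivity|].
  simpl; apply cls_eq, (cong_app R HR); intro i.
  rewrite IH; apply cls_eq; rewrite cls_rep; reflexivity.
Qed.

Lemma eval_cls_Var a : eval (term_quot R) (fun x => cls R (Var x)) a = cls R a.
Proof. rewrite eval_cls, subst_Var; reflexivity. Qed.

Lemma jn_cls J a b : jn J (term_quot R) (cls R a) (cls R b) = cls R (jt J a b).
Proof.
  unfold jn, jt; rewrite <- eval_cls; f_equal.
  extensionality z; destruct z; reflexivity.
Qed.

Lemma term_quot_in_var E : (forall a b, V_eq E a b -> R a b) -> in_var E (term_quot R).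
Proof.
  intros HV s t Hst v.
  replace v with (fun i => cls R (rep R (v i))) by (extensionality i; apply cls_rep).
  rewrite !eval_cls; apply cls_eq, HV; intros D HD u.
  rewrite !eval_subst; apply HD, Hst.
Qed.

End TermQuotientTheory.

Lemma term_quot_fin_gen {L : signature} {n : nat}
  (R : term L (Fin.t n) -> term L (Fin.t n) -> Prop) :
  congruence R -> fin_gen (term_quot R).
Proof.
  intro HR; exists n, (fun i => cls R (Var i)); intro q.
  rewrite <- (cls_rep R q), <- (eval_cls_Var HR (rep R q)).
  induction (rep R q) as [i|f ts IH].
  - exact (gen_base _ _ _ i).
  - apply gen_op, IH.
Qed.

Section FinitePresentations.
Context {L : signature} (E : identities L).

Lemma fp_cong_congruence n R : congruence (fp_cong E n R).
Proof. split; [apply fc_refl | apply fc_sym | apply fc_trans | apply fc_compat]. Qed.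

Lemma fp_cong_least n R (Q : term L (Fin.t n) -> term L (Fin.t n) -> Prop) :
  congruence Q -> (forall a b, V_eq E a b -> Q a b) -> (forall a b, In (a, b) R -> Q a b) ->
  forall a b, fp_cong E n R a b -> Q a b.
Proof.
  intros HQ HV HR a b Hab.
  destruct HQ as [Hrefl Hsym Htrans Happ].
  induction Hab; eauto.
Qed.

Lemma eval_kernel_congruence {X : Type} (D : algebra L) (u : X -> D) :
  congruence (fun a b => eval D u a = eval D u b).
Proof.
  split; intros; try congruence.
  simpl; f_equal; extensionality i; auto.
Qed.

Lemma fp_cong_sound n R (D : algebra L) (u : Fin.t n -> D) :
  in_var E D -> (forall a b, In (a, b) R -> eval D u a = eval D u b) ->
  forall a b, fp_cong E n R a b -> eval D u a = eval D u b.
Proof.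
  intros HD HR; apply fp_cong_least; [apply eval_kernel_congruence | | exact HR].
  intros a b Hab; apply Hab, HD.
Qed.

Lemma fp_cong_subst n k R R' (p : Fin.t n -> term L (Fin.t k)) :
  (forall a b, In (a, b) R -> fp_cong E k R' (subst p a) (subst p b)) ->
  forall a b, fp_cong E n R a b -> fp_cong E k R' (subst p a) (subst p b).
Proof.
  intro HR; apply (fp_cong_least n R (fun a b => fp_cong E k R' (subst p a) (subst p b)));
    [| | exact HR].
  - split; [intros; apply fc_refl | intros; apply fc_sym; auto
           | intros; eapply fc_trans; eauto | intros; apply fc_compat; auto].
  - intros a b Hab; apply fc_V; intros D HD u; rewrite !eval_subst; apply Hab, HD.
Qed.

Lemma fp_quot_in_var n R : in_var E (term_quot (fp_cong E n R)).
Proof. apply term_quot_in_var; [apply fp_cong_congruence | apply fc_V]. Qed.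

Lemma fp_quot_fin_presented n R : fin_presented E (term_quot (fp_cong E n R)).
Proof.
  pose proof (fp_cong_congruence n R) as HR.
  exists n, R, (fun i => cls _ (Var i)); split.
  - intro q; exists (rep _ q); rewrite (eval_cls_Var HR); apply cls_rep.
  - intros a b; rewrite !(eval_cls_Var HR); apply (cls_eq HR).
Qed.

(* A Tietze transformation: besides the old relations, rewritten through [p], the new
   relations identify each new generator with an old-generator expression [q j]. *)
Lemma fin_presented_generators (D : algebra L) k (h : Fin.t k -> D) :
  in_var E D -> fin_presented E D -> (forall d, exists a, eval D h a = d) ->
  exists R, forall a b, eval D h a = eval D h b <-> fp_cong E k R a b.
Proof.
  intros HD (n & R0 & g & Hg & HR0) Hh.
  destruct (functional_choice (fun i a => eval D h a = g i) (fun i => Hh (g i))) as [p Hp].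
  destruct (functional_choice (fun j a => eval D g a = h j) (fun j => Hg (h j))) as [q Hq].
  set (R := map (fun ab => (subst p (fst ab), subst p (snd ab))) R0
            ++ map (fun j => (Var j, subst p (q j))) (fin_enum k)).
  assert (Hhp : forall a, eval D h (subst p a) = eval D g a).
  { intro a; rewrite eval_subst; f_equal; extensionality i; apply Hp. }
  assert (Hgq : forall a, eval D g (subst q a) = eval D h a).
  { intro a; rewrite eval_subst; f_equal; extensionality j; apply Hq. }
  assert (Hpq : forall a, fp_cong E k R a (subst p (subst q a))).
  { induction a as [j|f ts IH]; [|apply fc_compat, IH].
    apply fc_R, in_or_app; right; apply in_map_iff; exists j; split;
      [reflexivity | apply fin_enum_complete]. }
  exists R; intros a b; split.
  - intro Hab.
    eapply fc_trans; [apply Hpq|]; eapply fc_trans; [|apply fc_sym, Hpq].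
    apply (fp_cong_subst n k R0); [intros c d Hcd | apply HR0; rewrite !Hgq; exact Hab].
    apply fc_R, in_or_app; left; apply in_map_iff; exists (c, d); auto.
  - apply fp_cong_sound; [exact HD|]; intros c d Hcd.
    apply in_app_or in Hcd as [Hcd|Hcd]; apply in_map_iff in Hcd.
    + destruct Hcd as ([c' d'] & [= <- <-] & Hin).
      rewrite !Hhp; apply HR0, fc_R, Hin.
    + destruct Hcd as (j & [= <- <-] & _); simpl; rewrite Hhp, Hq; reflexivity.
Qed.

Section Subalgebras.
Context (A : algebra L) (n : nat) (g : Fin.t n -> A).

Definition sub_gen_gens (i : Fin.t n) : sub_gen A n g := exist _ (g i) (gen_base A n g i).

Lemma sub_gen_eval {X : Type} (v : X -> sub_gen A n g) a :
  proj1_sig (eval (sub_gen A n g) v a) = eval A (fun x => proj1_sig (v x)) a.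
Proof.
  induction a as [x|f ts IH]; [reflexivity|].
  simpl; f_equal; extensionality i; apply IH.
Qed.

Lemma sub_gen_in_var : in_var E A -> in_var E (sub_gen A n g).
Proof.
  intros HA s t Hst v; apply eq_sig_hprop; [intros; apply proof_irrelevance|].
  rewrite !sub_gen_eval; apply HA, Hst.
Qed.

Lemma sub_gen_generated (d : sub_gen A n g) : exists a, eval (sub_gen A n g) sub_gen_gens a = d.
Proof.
  enough (exists a, proj1_sig (eval (sub_gen A n g) sub_gen_gens a) = proj1_sig d)
    as [a Ha] by (exists a; apply eq_sig_hprop; [intros; apply proof_irrelevance | exact Ha]).
  destruct d as [d Hd]; simpl; induction Hd as [i|f args _ IH].
  - exists (Var i); reflexivity.
  - destruct (functional_choice _ IH) as [ts Hts].
    exists (App f ts); simpl; f_equal; extensionality i; apply Hts.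
Qed.

End Subalgebras.

Lemma coherent_kernel (A : algebra L) n (g : Fin.t n -> A) :
  coherent E -> in_var E A -> fin_presented E A ->
  exists R, forall a b, eval A g a = eval A g b <-> fp_cong E n R a b.
Proof.
  intros Hcoh HA HAfp.
  destruct (fin_presented_generators (sub_gen A n g) n (sub_gen_gens A n g)
              (sub_gen_in_var A n g HA) (Hcoh A HA HAfp n g) (sub_gen_generated A n g))
    as [R HR].
  exists R; intros a b; rewrite <- HR.
  assert (Hval : forall c, proj1_sig (eval (sub_gen A n g) (sub_gen_gens A n g) c) = eval A g c)
    by (intro c; apply sub_gen_eval).
  rewrite <- !Hval; split; [intro Hab | congruence].
  apply eq_sig_hprop; [intros; apply proof_irrelevance | exact Hab].
Qed.

End FinitePresentations.

Fixpoint vars_below {L : signature} (N : nat) (a : term L nat) : Prop :=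
  match a with Var i => i < N | App f ts => forall j, vars_below N (ts j) end.

Section VarsBelow.
Context {L : signature}.

Lemma vars_below_mono N N' (a : term L nat) : N <= N' -> vars_below N a -> vars_below N' a.
Proof. induction a; simpl; intros; [lia | eauto]. Qed.

Lemma vars_below_exists (a : term L nat) : exists N, vars_below N a.
Proof.
  induction a as [x|f ts IH]; [exists (S x); simpl; lia|].
  apply (eventually_all_fin (fun N j => vars_below N (ts j))); [|exact IH].
  intros; eapply vars_below_mono; eauto.
Qed.

Lemma vars_below_subst N (s : nat -> term L nat) a :
  (forall i, i < N -> vars_below N (s i)) -> vars_below N a -> vars_below N (subst s a).
Proof. induction a; simpl; auto. Qed.

Lemma vars_below_titer N t k : 0 < N -> vars_below N t -> vars_below N (@titer L t k).
Proof.
  intros HN Ht; induction k; simpl; [exact HN|].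
  apply vars_below_subst; [intros [|i] Hi; simpl; auto | exact Ht].
Qed.

Lemma eval_vars_below N (A : algebra L) (v v' : nat -> A) a :
  vars_below N a -> (forall i, i < N -> v i = v' i) -> eval A v a = eval A v' a.
Proof.
  induction a as [x|f ts IH]; simpl; intros Ha Hv; auto.
  f_equal; extensionality i; auto.
Qed.

End VarsBelow.

Section FixpointEmbedding.
Context {L : signature} (E : identities L) (J : term L bool) (t : term L nat).
Hypothesis HJ : semilattice_term E J.
Hypothesis t_inflationary : forall A : algebra L, in_var E A -> forall v : nat -> A,
  leJ J A (v 0) (eval A v t).
Hypothesis t_monotone : forall A : algebra L, in_var E A -> forall (v : nat -> A) (y : A),
  leJ J A (v 0) y -> leJ J A (eval A v t) (eval A (upd0 v y) t).
Hypothesis t_FE : FE E J t.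
Hypothesis E_coherent : coherent E.
Variable M : nat.
Hypothesis t_vars : vars_below (S M) t.

Lemma titer_increasing D : in_var E D -> forall v k k', k <= k' ->
  leJ J D (eval D v (titer t k)) (eval D v (titer t k')).
Proof.
  intros HD v k k' Hk; induction Hk as [|k' _ IH]; [apply (leJ_refl HJ D HD)|].
  apply (leJ_trans HJ D HD _ _ _ IH); rewrite eval_titer_S.
  exact (t_inflationary D HD (upd0 v (eval D v (titer t k')))).
Qed.

(* Terms in the variables x, u_1, ..., u_M (as [tvar 0], ..., [tvar M]) and w. *)
Definition tvar (i : nat) : Fin.t (S (S M)) := Fin.FS (fin_of_nat M i).
Definition w : Fin.t (S (S M)) := Fin.F1.
Definition tpow (k : nat) : term L (Fin.t (S (S M))) := subst (fun i => Var (tvar i)) (titer t k).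

Lemma eval_tpow (D : algebra L) (u : Fin.t (S (S M)) -> D) k :
  eval D u (tpow k) = eval D (fun i => u (tvar i)) (titer t k).
Proof. apply eval_subst. Qed.

(* [Theta n] is the equational form of the congruence generated by t^n(x, u) <= w. *)
Definition Theta (n : nat) (a b : term L (Fin.t (S (S M)))) : Prop :=
  forall D, in_var E D -> forall u : Fin.t (S (S M)) -> D,
    leJ J D (eval D u (tpow n)) (u w) -> eval D u a = eval D u b.

Definition Theta_inf (a b : term L (Fin.t (S (S M)))) : Prop := exists n, Theta n a b.

Lemma Theta_congruence n : congruence (Theta n).
Proof.
  split; intros; intros D HD u Hu.
  - reflexivity.
  - symmetry; auto.
  - rewrite (H D HD u Hu); auto.
  - simpl; f_equal; extensionality i; apply H; auto.
Qed.

Lemma V_eq_Theta n a b : V_eq E a b -> Theta n a b.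
Proof. intros Hab D HD u _; apply Hab, HD. Qed.

Lemma Theta_mono n n' a b : n <= n' -> Theta n a b -> Theta n' a b.
Proof.
  intros Hn Hab D HD u Hu; apply Hab; [exact HD|].
  rewrite eval_tpow in *; apply (leJ_trans HJ D HD _ _ _ (titer_increasing D HD _ n n' Hn)), Hu.
Qed.

Lemma Theta_inf_congruence : congruence Theta_inf.
Proof.
  split.
  - intro a; exists 0; apply (cong_refl _ (Theta_congruence 0)).
  - intros a b [n Hab]; exists n; apply (cong_sym _ (Theta_congruence n)), Hab.
  - intros a b c [n Hab] [n' Hbc]; exists (max n n').
    apply (cong_trans _ (Theta_congruence _) a b c);
      [apply (Theta_mono n) | apply (Theta_mono n')]; auto; lia.
  - intros f ss ts Hst.
    destruct (eventually_all_fin (fun n i => Theta n (ss i) (ts i))) as [n Hn];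
      [intros; eapply Theta_mono; eauto | exact Hst |].
    exists n; apply (cong_app _ (Theta_congruence n)), Hn.
Qed.

Definition C : algebra L := term_quot Theta_inf.

Lemma C_in_var : in_var E C.
Proof.
  apply (term_quot_in_var Theta_inf_congruence); intros a b Hab.
  exists 0; apply V_eq_Theta, Hab.
Qed.

(* The finitely presented algebra <x, u, w, y | x <= y, t(y, u) = y, y <= w>, with
   y the first generator and the generators of [Theta] shifted by one. *)
Definition y : Fin.t (S (S (S M))) := Fin.F1.
Definition lift (i : Fin.t (S (S M))) : term L (Fin.t (S (S (S M)))) := Var (Fin.FS i).
Definition t_at_y : term L (Fin.t (S (S (S M)))) :=
  subst (fun i => match i with 0 => Var y | S j => lift (tvar (S j)) end) t.
Definition relsA : list (term L (Fin.t (S (S (S M)))) * term L (Fin.t (S (S (S M))))) :=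
  [(jt J (lift (tvar 0)) (Var y), Var y); (t_at_y, Var y); (jt J (Var y) (lift w), lift w)].
Definition A : algebra L := term_quot (fp_cong E _ relsA).
Definition gensA (i : Fin.t (S (S M))) : A := cls _ (lift i).

Lemma A_tpow_le_w m : eval A gensA (jt J (tpow m) (Var w)) = eval A gensA (Var w).
Proof.
  pose proof (fp_quot_in_var E _ relsA) as HA.
  pose proof (fp_cong_congruence E _ relsA) as HR.
  assert (Hrel : forall p q, In (p, q) relsA -> cls _ p = cls (fp_cong E _ relsA) q)
    by (intros p q Hpq; apply (cls_eq HR), fc_R, Hpq).
  set (vA := fun i => gensA (tvar i)).
  set (yA := cls (fp_cong E _ relsA) (Var y)).
  assert (Hty : eval A (upd0 vA yA) t = yA).
  { transitivity (cls (fp_cong E _ relsA) t_at_y); [|apply Hrel; simpl; auto].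
    unfold t_at_y; rewrite <- (eval_cls HR); f_equal.
    extensionality i; destruct i; reflexivity. }
  assert (Hchain : forall k, leJ J A (eval A vA (titer t k)) yA).
  { induction k as [|k IH].
    - unfold leJ; simpl; unfold vA, gensA, yA; rewrite (jn_cls HR).
      apply Hrel; simpl; auto.
    - rewrite eval_titer_S, <- Hty at 1. exact (t_monotone A HA _ yA IH). }
  rewrite eval_jt, eval_tpow.
  apply (leJ_trans HJ A HA _ yA _ (Hchain m)).
  unfold leJ, yA; simpl; unfold gensA; rewrite (jn_cls HR).
  apply Hrel; simpl; auto.
Qed.

Lemma A_kernel_sub_Theta_inf a b : eval A gensA a = eval A gensA b -> Theta_inf a b.
Proof.
  intro Hab.
  pose proof (fp_cong_congruence E _ relsA) as HRA.
  set (vC := fun i => cls Theta_inf (Var (tvar i)) : C).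
  destruct (t_FE C C_in_var (term_quot_fin_gen _ Theta_inf_congruence) vC)
    as (B & e & HB & He & He_inj & s & [s_ub s_lub] & s_fix).
  (* Send y to s and the other generators through e; this satisfies the relations of A. *)
  set (uB := fin_cons s (fun i => e (cls Theta_inf (Var i)))).
  assert (HuB : forall c, eval B uB (subst lift c) = e (cls Theta_inf c)).
  { intro c; rewrite eval_subst, <- (eval_cls_Var Theta_inf_congruence c).
    rewrite (eval_hom C B e He); reflexivity. }
  apply (cls_eq Theta_inf_congruence), He_inj; rewrite <- !HuB.
  apply (fp_cong_sound E _ relsA B uB HB).
  2: { apply (cls_eq HRA); unfold gensA in Hab; rewrite !(eval_cls HRA) in Hab; exact Hab. }
  intros p q Hpq; simpl in Hpq; destruct Hpq as [Hpq|[Hpq|[Hpq|[]]]];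
    injection Hpq as <- <-.
  - rewrite eval_jt; exact (s_ub 0).
  - symmetry; etransitivity; [exact s_fix|].
    unfold t_at_y; rewrite eval_subst; f_equal; extensionality i; destruct i; reflexivity.
  - rewrite eval_jt; apply s_lub; intro k.
    unfold vC; rewrite (eval_cls Theta_inf_congruence).
    apply (leJ_hom J C B e He); unfold leJ; rewrite (jn_cls Theta_inf_congruence).
    apply (cls_eq Theta_inf_congruence); exists k; intros D HD u Hu.
    rewrite eval_jt; exact Hu.
Qed.

Lemma A_kernel_sub_Theta : exists n, forall a b, eval A gensA a = eval A gensA b -> Theta n a b.
Proof.
  destruct (coherent_kernel E A _ gensA E_coherent (fp_quot_in_var E _ relsA)
              (fp_quot_fin_presented E _ relsA)) as [R HR].
  destruct (eventually_all_list (fun n ab => Theta n (fst ab) (snd ab)) R) as [n Hn].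
  - intros n n' [a b]; apply Theta_mono.
  - intros [a b] Hab; apply A_kernel_sub_Theta_inf, HR, fc_R, Hab.
  - exists n; intros a b Hab; apply HR in Hab; revert a b Hab.
    apply (fp_cong_least E _ R); [apply Theta_congruence | apply V_eq_Theta |].
    intros a b Hab; exact (Hn (a, b) Hab).
Qed.

Lemma titer_stabilizes : exists n, forall D : algebra L, in_var E D -> forall v : nat -> D,
  eval D v (titer t n) = eval D v (titer t (S n)).
Proof.
  destruct A_kernel_sub_Theta as [n Hn]; exists n; intros D HD v.
  (* Evaluate w as t^n(x, u). *)
  set (u := fin_cons (eval D v (titer t n)) (fun i : Fin.t (S M) => v (proj1_sig (Fin.to_nat i)))).
  assert (Hu : forall k, eval D u (tpow k) = eval D v (titer t k)).
  { intro k; rewrite eval_tpow; apply (eval_vars_below (S M)); [apply vars_below_titer; auto; lia|].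
    intros i Hi; simpl; rewrite fin_to_nat_of_nat; auto. }
  pose proof (Hn _ _ (A_tpow_le_w (S n)) D HD u) as Hle.
  rewrite eval_jt, !Hu in Hle.
  apply (leJ_antisym HJ D HD); [apply titer_increasing; auto |].
  apply Hle, (leJ_refl HJ D HD).
Qed.

End FixpointEmbedding.

Theorem theorem3p1 :
  forall (L : signature), (exists c : sym L, arity L c = 0) ->
  forall (E : identities L), coherent E ->
  forall (J : term L bool), semilattice_term E J ->
  forall (t : term L nat),
    (forall A : algebra L, in_var E A -> forall v : nat -> A,
        leJ J A (v 0) (eval A v t)) ->
    (forall A : algebra L, in_var E A -> forall (v : nat -> A) (y : A),
        leJ J A (v 0) y -> leJ J A (eval A v t) (eval A (upd0 v y) t)) ->
    FE E J t ->
    exists n : nat, forall A : algebra L, in_var E A -> forall v : nat -> A,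
      eval A v (titer t n) = eval A v (titer t (S n)).
Proof.
  intros L _ E Hcoh J HJ t Hinfl Hmono HFE.
  destruct (vars_below_exists t) as [M HM].
  apply (titer_stabilizes E J t HJ Hinfl Hmono HFE Hcoh M).
  apply (vars_below_mono M); [lia | exact HM].
Qed.
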